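(* For every integer $n\ge 4$ there exists a family of $\left\lfloor \frac{6(n-1)}{5}\right\rfloor$ even cycles on a vertex set of size $n$ which contains no rainbow even cycle.
   Context: A (colored) graph is a finite set $\mathsf G$ of pairs $(e,\alpha)$, where the $e$'s are pairwise distinct 2-element subsets $\{u,v\}$ (written $uv$) of a vertex set and $\alpha$ is a color (different edges may have the same color). $\chi(\mathsf G)$ is the set of colors used; $\mathsf G$ is rainbow if $|\chi(\mathsf G)|=|\mathsf G|$. A cycle is a colored graph whose underlying uncolored edge set forms a cycle; it is even if its number of edges is even. A family of cycles on a vertex set $V$ is a list $(\mathsf D_1,\dots,\mathsf D_m)$ of cycles with vertices in $V$, where all edges of $\mathsf D_i$ receive one color $\alpha_i$ and $\alpha_1,\dots,\alpha_m$ are pairwise distinct (the underlying uncolored cycles may coincide). The family contains a rainbow even cycle if there is an even cycle $\mathsf G\subseteq\bigcup_i\mathsf D_i$ that is rainbow, i.e. formed by edges from pairwise distinct $\mathsf D_i$'s. *)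

From mathcomp Require Import all_boot.
Set Implicit Arguments.
Unset Strict Implicit.
Unset Printing Implicit Defensive.

(* Vertices: 'I_n.  An (uncolored) edge uv is the 2-element set [set u; v].
   An uncolored graph is a set of edges {set {set 'I_n}}. *)

(* (v0 is only a default value for nth; since size s >= 3 it is irrelevant.) *)
Definition is_cycle (n : nat) (E : {set {set 'I_n}}) : Prop :=
  exists (v0 : 'I_n) (s : seq 'I_n),
    [/\ 3 <= size s, uniq s &
        forall e : {set 'I_n},
          e \in E <->
          exists2 i, i < size s &
            e = [set nth (head v0 s) s i; nth (head v0 s) s ((i.+1) %% size s)] ].

Definition is_even_cycle (n : nat) (E : {set {set 'I_n}}) : Prop :=
  is_cycle E /\ ~~ odd #|E|.

(* A family of m cycles D_0, ..., D_{m-1} on 'I_n; D_i has color i, so the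
   colors are automatically pairwise distinct. *)
Definition has_rainbow_even_cycle (n m : nat) (D : 'I_m -> {set {set 'I_n}}) : Prop :=
  exists (E : {set {set 'I_n}}) (c : {set 'I_n} -> 'I_m),
    [/\ is_even_cycle E,
        (forall e, e \in E -> e \in D (c e)) &
        {in E &, injective c}].

(* The families are built by gluing small blocks at a single shared vertex.  A
   rainbow even cycle of a glued family cannot pass through the cut vertex from one
   block into the other, so it lies inside one block and pulls back to a rainbow even
   cycle there.  Gluing the 6-vertex block carrying 6 cycles onto the family for
   n - 5 vertices gains 5 vertices and 6 cycles, which is exactly the growth of
   floor(6(n-1)/5); the blocks for 4 <= n <= 8 are checked by computation: every
   even cycle of their union graph has more edges lying only in copies of one cycle
   than there are such copies, so by pigeonhole it cannot be rainbow. *)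

From mathcomp Require Import all_boot zmodp zify.
Set Implicit Arguments. Unset Strict Implicit. Unset Printing Implicit Defensive.

Lemma set2_eq (T : finType) (x y u v : T) : x != y -> [set x; y] = [set u; v] ->
  (x = u /\ y = v) \/ (x = v /\ y = u).
Proof.
move=> xy Exy.
have /set2P x_uv : x \in [set u; v] by rewrite -Exy set21.
have /set2P y_uv : y \in [set u; v] by rewrite -Exy set22.
by move: xy; case: x_uv y_uv => -> [] ->; rewrite ?eqxx; auto.
Qed.

Section NextInUniqCycle.
Variables (T : eqType) (s : seq T).
Hypothesis s_uniq : uniq s.

Lemma next_neq x : 2 <= size s -> x \in s -> next s x != x.
Proof.
move=> s2 /rot_to[i [|y p] rot_s]; first by rewrite -(size_rot i) rot_s in s2.
rewrite -(next_rot i s_uniq) rot_s /= eqxx.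
by have := s_uniq; rewrite -(rot_uniq i) rot_s /= inE negb_or eq_sym => /andP[/andP[]].
Qed.

Lemma next_next_neq x : 3 <= size s -> x \in s -> next s (next s x) != x.
Proof.
move=> s3 /rot_to[i [|y [|z p]] rot_s]; try by rewrite -(size_rot i) rot_s in s3.
have := s_uniq; rewrite -(rot_uniq i) rot_s /= !inE !negb_or.
case/and3P=> /and3P[xy xz _] _ _.
by rewrite -2!(next_rot i s_uniq) rot_s /= eqxx (ifN_eqC _ _ xy) eqxx eq_sym.
Qed.

End NextInUniqCycle.

Section CutVertex.
Variables (T : eqType) (z : T) (P : pred T).

Lemma fpath_avoid_eq (f : T -> T) x p :
  (forall y, y != z -> f y != z -> P (f y) = P y) ->
  fpath f x p -> z \notin x :: p -> {in x :: p, forall y, P y = P x}.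
Proof.
move=> fP; elim: p x => [|y p IHp] x /=; first by move=> _ _ y /[!inE] /eqP->.
case/andP=> /eqP fx_y y_p; rewrite inE negb_or => /andP[zx z_yp] w.
have Py : P y = P x by rewrite -fx_y fP ?fx_y // eq_sym; move: z_yp; rewrite inE negb_or => /andP[].
by rewrite inE => /predU1P[-> // | /(IHp y y_p z_yp) ->].
Qed.

Lemma fpath_next_rot (s : seq T) i x p : uniq s -> rot i s = x :: p -> fpath (next s) x p.
Proof.
move=> s_uniq rot_s.
have : fcycle (next (rot i s)) (rot i s) by apply: cycle_next; rewrite rot_uniq.
have next_eq : frel (next (rot i s)) =2 frel (next s) by move=> a b /=; rewrite next_rot.
by rewrite {2}rot_s /= rcons_path (eq_path next_eq) => /andP[].
Qed.

Lemma cycle_avoid_eq (s : seq T) : uniq s ->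
  (forall y, y \in s -> y != z -> next s y != z -> P (next s y) = P y) ->
  {in s &, forall x y, x != z -> y != z -> P x = P y}.
Proof.
move=> s_uniq sP x y xs ys xz yz.
have fP y' : y' != z -> next s y' != z -> P (next s y') = P y'.
  by case ys' : (y' \in s); [apply: sP | rewrite next_nth ys'].
have [zs | zNs] := boolP (z \in s).
  have [i [|r p] rot_s] := rot_to zs.
    by move: xs xz; rewrite -(mem_rot i) rot_s inE => ->.
  have in_rp w : w \in s -> w != z -> w \in r :: p.
    by rewrite -(mem_rot i) rot_s inE => /predU1P[->|]; rewrite ?eqxx.
  have := s_uniq; rewrite -(rot_uniq i) rot_s => /andP[z_rp _].
  have /andP[_ /(fpath_avoid_eq fP)/(_ z_rp) const] := fpath_next_rot s_uniq rot_s.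
  by rewrite (const x) ?(const y) ?in_rp.
have [i p rot_s] := rot_to xs.
have := fpath_avoid_eq fP (fpath_next_rot s_uniq rot_s).
rewrite -rot_s mem_rot => /(_ zNs) const.
by rewrite (const y) // mem_rot.
Qed.

Lemma cycle_cut_vertex (Q : pred T) (s : seq T) : uniq s ->
  (forall x, P x || Q x) -> (forall x, P x -> Q x -> x = z) -> P z -> Q z ->
  (forall x, x \in s -> P x && P (next s x) || Q x && Q (next s x)) ->
  {subset s <= P} \/ {subset s <= Q}.
Proof.
move=> s_uniq PQ PQz Pz Qz s_edges.
have notP x : x != z -> Q x -> P x = false.
  by move=> xz Qx; apply/negbTE; apply: contra xz => Px; rewrite (PQz x Px Qx).
have /(cycle_avoid_eq s_uniq) side_eq : forall y, y \in s -> y != z -> next s y != z ->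
    P (next s y) = P y.
  move=> y ys yz nyz; case/orP: (s_edges y ys) => /andP[Py Pny]; first by rewrite Py Pny.
  by rewrite !notP.
have [/allP | ] := boolP (all P s); first by left.
rewrite -has_predC => /hasP[x xs /= nPx]; right=> y ys.
have [-> // | yz] := eqVneq y z.
have xz : x != z by apply: contraNneq nPx => ->.
by have := PQ y; rewrite (side_eq y x) // (negbTE nPx).
Qed.

End CutVertex.

Section CycleEdges.
Variable n : nat.
Implicit Types (x y : 'I_n) (p s : seq 'I_n) (E : {set {set 'I_n}}).

Definition cycle_edges s : {set {set 'I_n}} := [set [set x; next s x] | x in s].

Lemma next_nth_mod y p i : uniq (y :: p) -> i < size (y :: p) ->
  next (y :: p) (nth y (y :: p) i) = nth y (y :: p) (i.+1 %% size (y :: p)).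
Proof.
move=> yp_uniq i_lt; rewrite next_nth mem_nth // index_uniq //=.
have [i_p | ] := ltnP i (size p); first by rewrite modn_small.
rewrite leq_eqVlt ltnNge -ltnS i_lt orbF => /eqP <-.
by rewrite modnn nth_default.
Qed.

Lemma mem_cycle_edgesP y p e : uniq (y :: p) ->
  reflect (exists2 i, i < size (y :: p) &
             e = [set nth y (y :: p) i; nth y (y :: p) (i.+1 %% size (y :: p))])
          (e \in cycle_edges (y :: p)).
Proof.
move=> yp_uniq; apply: (iffP imsetP) => [[x x_yp ->] | [i i_lt ->]].
  by exists (index x (y :: p)); rewrite ?index_mem // -next_nth_mod ?index_mem ?nth_index.
by exists (nth y (y :: p) i); rewrite ?mem_nth ?next_nth_mod.
Qed.

Lemma cycle_edge_inj s : uniq s -> 3 <= size s ->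
  {in s &, injective (fun x => [set x; next s x])}.
Proof.
move=> s_uniq s3 x y xs ys.
have x_nx : x != next s x by rewrite eq_sym next_neq // ltnW.
case/(set2_eq x_nx) => [[] // | [x_ny nx_y]].
by move/eqP: (next_next_neq s_uniq s3 ys); rewrite -x_ny.
Qed.

Lemma card_cycle_edges s : uniq s -> 3 <= size s -> #|cycle_edges s| = size s.
Proof.
by move=> s_uniq s3; rewrite card_in_imset ?(card_uniqP s_uniq) //; apply: cycle_edge_inj.
Qed.

Lemma is_even_cycleP E : is_even_cycle E <->
  exists s, [/\ uniq s, 3 <= size s, ~~ odd (size s) & E = cycle_edges s].
Proof.
split=> [[[v0 [s [s3 s_uniq E_s]]] E_even] | [s [s_uniq s3 s_even ->]]].
  case: s s3 s_uniq E_s => // y p s3 yp_uniq E_s.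
  have E_yp : E = cycle_edges (y :: p).
    by apply/setP=> e; apply/idP/(mem_cycle_edgesP _ yp_uniq) => /E_s.
  by exists (y :: p); split=> //; rewrite -card_cycle_edges // -E_yp.
case: s s_uniq s3 s_even => // y p yp_uniq s3 s_even.
split; last by rewrite card_cycle_edges.
exists y, (y :: p); split=> // e.
by split=> /(mem_cycle_edgesP _ yp_uniq).
Qed.

End CycleEdges.

Section Relabel.
Variables (n N : nat) (f : 'I_n -> 'I_N).
Hypothesis f_inj : injective f.

Definition relabel (E : {set {set 'I_n}}) : {set {set 'I_N}} := [set f @: e | e : {set 'I_n} in E].

Lemma relabel_cycle_edges s : uniq s -> relabel (cycle_edges s) = cycle_edges (map f s).
Proof.
move=> s_uniq; apply/setP=> e.
apply/imsetP/imsetP => [[_ /imsetP[x xs ->] ->] | [_ /mapP[x xs ->] ->]].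
  by exists (f x); [exact: map_f | rewrite next_map // imsetU1 imset_set1].
by exists [set x; next s x]; [exact: imset_f | rewrite next_map // imsetU1 imset_set1].
Qed.

Lemma is_even_cycle_relabel E : is_even_cycle E -> is_even_cycle (relabel E).
Proof.
case/is_even_cycleP=> s [s_uniq s3 s_even ->]; apply/is_even_cycleP.
by exists (map f s); rewrite relabel_cycle_edges // map_inj_uniq // size_map.
Qed.

Lemma mem_relabel E (e : {set 'I_n}) : (f @: e \in relabel E) = (e \in E).
Proof. exact/mem_imset/imset_inj. Qed.

End Relabel.

Lemma relabel_sub_codom n N (f : 'I_n -> 'I_N) E e : e \in relabel f E -> {subset e <= codom f}.
Proof. by case/imsetP=> e' _ -> _ /imsetP[x _ ->]; apply: codom_f. Qed.

Definition rainbow_free n m := exists D : 'I_m -> {set {set 'I_n}},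
  (forall i, is_even_cycle (D i)) /\ ~ has_rainbow_even_cycle D.

Lemma rainbow_pullback n N p M (f : 'I_n -> 'I_N) (g : 'I_p -> 'I_M)
    (D : 'I_p -> {set {set 'I_n}}) (D' : 'I_M -> {set {set 'I_N}}) :
  injective f -> injective g ->
  (forall j u v, u != v -> f @: [set u; v] \in D' j ->
     exists2 i, j = g i & [set u; v] \in D i) ->
  forall s (c : {set 'I_N} -> 'I_M), uniq s -> 3 <= size s -> ~~ odd (size s) ->
  {subset s <= codom f} -> (forall e, e \in cycle_edges s -> e \in D' (c e)) ->
  {in cycle_edges s &, injective c} -> has_rainbow_even_cycle D.
Proof.
move=> f_inj g_inj D'D s c s_uniq s3 s_even /map_preim s_f.
rewrite -{}s_f in s_uniq s3 s_even *; move: (preim_seq f s) s_uniq s3 s_even => s1.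
rewrite map_inj_uniq // size_map => s1_uniq s3 s_even s_col c_inj.
rewrite -relabel_cycle_edges // in s_col c_inj.
have col e : e \in cycle_edges s1 -> exists2 i, c (f @: e) = g i & e \in D i.
  case/imsetP=> x xs1 ->; apply: D'D; last by apply: s_col; rewrite mem_relabel //; apply: imset_f.
  by rewrite eq_sym next_neq // ltnW.
have [x0 x0s1] : exists x, x \in s1.
  by case: s1 s3 {s1_uniq s_even s_col c_inj col} => // x t _; exists x; rewrite mem_head.
have [i0 _ _] := col _ (imset_f _ x0s1).
pose c1 (e : {set 'I_n}) := odflt i0 [pick i | g i == c (f @: e)].
have c1_col e : e \in cycle_edges s1 -> c (f @: e) = g (c1 e) /\ e \in D (c1 e).
  case/col=> i ce_gi e_Di; rewrite /c1 ce_gi.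
  by case: pickP => [i' /eqP/g_inj -> | /(_ i)]; rewrite ?eqxx.
exists (cycle_edges s1), c1; split.
- by apply/is_even_cycleP; exists s1.
- by move=> e /c1_col[].
move=> e1 e2 e1_s1 e2_s1 c1_e12; apply: (imset_inj f_inj); apply: c_inj.
- by rewrite mem_relabel.
- by rewrite mem_relabel.
by rewrite (c1_col _ e1_s1).1 (c1_col _ e2_s1).1 c1_e12.
Qed.

(* Unlike [enum 'I_n.+1], whose [insub] is stuck on the opaque [idP], this
   enumeration evaluates under [vm_compute]. *)
Definition ord_seq n : seq 'I_n.+1 := map inZp (iota 0 n.+1).

Lemma mem_ord_seq n (x : 'I_n.+1) : x \in ord_seq n.
Proof. by rewrite -[x]valZpK map_f // mem_iota ltn_ord. Qed.

Section Certificate.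
Variables (k m : nat) (cs : 'I_m.+1 -> seq 'I_k.+1).

Definition edgeb (c : seq 'I_k.+1) (x y : 'I_k.+1) :=
  (x \in c) && (next c x == y) || (y \in c) && (next c y == x).

Lemma edgeb_cycle_edges c x y : x != y -> [set x; y] \in cycle_edges c -> edgeb c x y.
Proof.
move=> xy /imsetP[u uc /(set2_eq xy)[[-> ->] | [-> ->]]]; apply/orP.
  by left; rewrite eqxx andbT.
by right; rewrite eqxx andbT.
Qed.

Definition adjb x y := has (fun i => edgeb (cs i) x y) (ord_seq m).

Fixpoint adj_paths l : seq (seq 'I_k.+1) :=
  if l is l'.+1 then
    [seq p <- [seq x :: p | p <- adj_paths l', x <- ord_seq k] | uniq p && sorted adjb p]
  else [:: [::]].

Lemma mem_adj_paths p : uniq p -> sorted adjb p -> p \in adj_paths (size p).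
Proof.
elim: p => [|x p IHp] // xp_uniq xp_sorted.
rewrite mem_filter xp_uniq xp_sorted; apply: allpairs_f; last exact: mem_ord_seq.
by apply: IHp (path_sorted xp_sorted); case/andP: xp_uniq.
Qed.

Definition exclusive i0 x y := all (fun i => edgeb (cs i) x y ==> (cs i == cs i0)) (ord_seq m).

(* Pigeonhole: the edges of [s] found only in copies of [cs i0] outnumber those
   copies, so no injective colouring of the edges of [s] exists. *)
Definition blocked s := has (fun i0 =>
  count (fun i => cs i == cs i0) (ord_seq m) < count (fun x => exclusive i0 x (next s x)) s)
  (ord_seq m).

Definition no_rainbow_certificate := all (fun l =>
  all (fun s => cycle adjb s && ~~ odd (size s) ==> blocked s) (adj_paths l)) (iota 3 (k - 1)).

Lemma no_rainbow_certificate_sound :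
  no_rainbow_certificate -> ~ has_rainbow_even_cycle (fun i => cycle_edges (cs i)).
Proof.
move=> cert [_ [c [/is_even_cycleP[s [s_uniq s3 s_even ->]] s_col c_inj]]].
pose col x := c [set x; next s x].
have s_edge x : x \in s -> edgeb (cs (col x)) x (next s x).
  move=> xs; apply: edgeb_cycle_edges; last by apply: s_col; apply: imset_f.
  by rewrite eq_sym next_neq // ltnW.
have s_cycle : cycle adjb s.
  by apply: cycle_from_next => // x xs; apply/hasP; exists (col x); rewrite ?mem_ord_seq ?s_edge.
have s_path : s \in adj_paths (size s).
  apply: mem_adj_paths => //; case: s s_cycle {s_uniq s3 s_even s_col c_inj col s_edge} => // x p.
  by rewrite (cycle_path x) => /path_sorted.
have s_size : size s \in iota 3 (k - 1).
  by have := max_card (mem s); rewrite mem_iota s3 card_ord (card_uniqP s_uniq) /=; lia.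
have /hasP[i0 _] : blocked s.
  by move/allP: cert => /(_ _ s_size)/allP/(_ _ s_path); rewrite s_cycle s_even.
apply/negP; rewrite -leqNgt -!size_filter -(size_map col).
apply: uniq_leq_size => [|_ /mapP[x + ->]].
  rewrite map_inj_in_uniq ?filter_uniq // => x y /[!mem_filter] /andP[_ xs] /andP[_ ys].
  move=> col_xy; apply: (cycle_edge_inj s_uniq s3 xs ys).
  by apply: c_inj col_xy; apply: imset_f.
rewrite mem_filter => /andP[excl xs]; rewrite mem_filter mem_ord_seq andbT.
by move/allP: excl => /(_ (col x) (mem_ord_seq _))/implyP; apply; apply: s_edge.
Qed.

End Certificate.

Lemma rainbow_free_of_certificate k m (cs : 'I_m.+1 -> seq 'I_k.+1) :
  all (fun i => [&& uniq (cs i), 3 <= size (cs i) & ~~ odd (size (cs i))]) (ord_seq m) ->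
  no_rainbow_certificate cs -> rainbow_free k.+1 m.+1.
Proof.
move=> /allP cs_even cert; exists (fun i => cycle_edges (cs i)).
split; last exact: no_rainbow_certificate_sound.
by move=> i; apply/is_even_cycleP; exists (cs i); case/and3P: (cs_even i (mem_ord_seq i)).
Qed.

Definition cycle_family {k m : nat} (L : seq (seq nat)) : 'I_m -> seq 'I_k.+1 :=
  fun i => map inZp (nth [::] L i).

Lemma rainbow_free_4_3 : rainbow_free 4 3.
Proof.
by apply: (rainbow_free_of_certificate (cs := cycle_family (nseq 3 [:: 0; 1; 2; 3])));
  vm_compute.
Qed.

Lemma rainbow_free_5_4 : rainbow_free 5 4.
Proof.
by apply: (rainbow_free_of_certificate (cs :=
  cycle_family (nseq 2 [:: 0; 1; 3; 2] ++ nseq 2 [:: 0; 1; 4; 3]))); vm_compute.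
Qed.

Lemma rainbow_free_6_6 : rainbow_free 6 6.
Proof.
by apply: (rainbow_free_of_certificate (cs :=
  cycle_family (nseq 3 [:: 0; 1; 3; 2] ++ nseq 3 [:: 0; 3; 5; 4]))); vm_compute.
Qed.

Lemma rainbow_free_7_7 : rainbow_free 7 7.
Proof.
by apply: (rainbow_free_of_certificate (cs :=
  cycle_family (nseq 3 [:: 0; 1; 3; 2] ++ [:: 0; 3; 5; 4] :: nseq 3 [:: 1; 4; 6; 5])));
  vm_compute.
Qed.

Lemma rainbow_free_8_8 : rainbow_free 8 8.
Proof.
by apply: (rainbow_free_of_certificate (cs :=
  cycle_family (nseq 3 [:: 0; 1; 3; 2] ++ nseq 5 [:: 0; 3; 4; 5; 6; 7]))); vm_compute.
Qed.

(* The left block lives on the vertices 0..a and the right one on a..a+b; they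
   share the vertex a.  ['I_(a.+1 + b)] is convertible to ['I_(a + b).+1]. *)
Section Glue.
Variables (a b : nat).

Definition glue_left (x : 'I_a.+1) : 'I_(a + b).+1 := lshift b x.
Definition glue_right (y : 'I_b.+1) : 'I_(a + b).+1 := cast_ord (addnS a b) (rshift a y).

Lemma glue_left_inj : injective glue_left. Proof. exact: lshift_inj. Qed.

Lemma glue_right_inj : injective glue_right.
Proof. by move=> y1 y2 /cast_ord_inj/rshift_inj. Qed.

Lemma codom_glue_left v : (v \in codom glue_left) = (v <= a).
Proof.
apply/codomP/idP => [[x ->] | v_le]; first by rewrite /= -ltnS.
by exists (Ordinal (v_le : v < a.+1)); apply: val_inj.
Qed.

Lemma codom_glue_right v : (v \in codom glue_right) = (a <= v).
Proof.
apply/codomP/idP => [[y ->] | a_le]; first exact: leq_addr.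
have v_a : v - a < b.+1 by have := ltn_ord v; lia.
by exists (Ordinal v_a); apply: val_inj; rewrite /= subnKC.
Qed.

Variables (p q : nat) (D1 : 'I_p -> {set {set 'I_a.+1}}) (D2 : 'I_q -> {set {set 'I_b.+1}}).

Definition glue_family (i : 'I_(p + q)) : {set {set 'I_(a + b).+1}} :=
  match split i with
  | inl i1 => relabel glue_left (D1 i1)
  | inr i2 => relabel glue_right (D2 i2)
  end.

Lemma glue_family_even : (forall i, is_even_cycle (D1 i)) -> (forall i, is_even_cycle (D2 i)) ->
  forall i, is_even_cycle (glue_family i).
Proof.
move=> D1_even D2_even i; rewrite /glue_family; case: (split i) => j.
  exact/is_even_cycle_relabel/D1_even/glue_left_inj.
exact/is_even_cycle_relabel/D2_even/glue_right_inj.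
Qed.

Lemma glue_family_sides i e : e \in glue_family i ->
  {subset e <= codom glue_left} \/ {subset e <= codom glue_right}.
Proof.
by rewrite /glue_family; case: (split i) => j /relabel_sub_codom; [left | right].
Qed.

Lemma glue_family_left j u v : u != v -> glue_left @: [set u; v] \in glue_family j ->
  exists2 i, j = lshift q i & [set u; v] \in D1 i.
Proof.
move=> uv; rewrite /glue_family -[j]splitK; case: (split j) => i; rewrite unsplitK.
  by rewrite mem_relabel; [exists i | apply: glue_left_inj].
move/relabel_sub_codom => uv_right; move: uv.
have /[!codom_glue_right] /= au := uv_right _ (imset_f _ (set21 u v)).
have /[!codom_glue_right] /= av := uv_right _ (imset_f _ (set22 u v)).
suff -> : u = v by rewrite eqxx.
by apply: ord_inj; have := ltn_ord u; have := ltn_ord v; lia.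
Qed.

Lemma glue_family_right j u v : u != v -> glue_right @: [set u; v] \in glue_family j ->
  exists2 i, j = rshift p i & [set u; v] \in D2 i.
Proof.
move=> uv; rewrite /glue_family -[j]splitK; case: (split j) => i; rewrite unsplitK; last first.
  by rewrite mem_relabel; [exists i | apply: glue_right_inj].
move/relabel_sub_codom => uv_left; move: uv.
have /[!codom_glue_left] /= ua := uv_left _ (imset_f _ (set21 u v)).
have /[!codom_glue_left] /= va := uv_left _ (imset_f _ (set22 u v)).
suff -> : u = v by rewrite eqxx.
by apply: ord_inj; lia.
Qed.

End Glue.

Lemma rainbow_free_glue a b p q :
  rainbow_free a.+1 p -> rainbow_free b.+1 q -> rainbow_free (a + b).+1 (p + q).
Proof.
case=> D1 [D1_even D1_free] [D2 [D2_even D2_free]].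
exists (glue_family D1 D2); split; first exact: glue_family_even.
case=> _ [c [/is_even_cycleP[s [s_uniq s3 s_even ->]] s_col c_inj]].
have [s_left | s_right] : {subset s <= [pred v : 'I_(a + b).+1 | v <= a]} \/
                          {subset s <= [pred v : 'I_(a + b).+1 | a <= v]}.
  apply: (cycle_cut_vertex (z := glue_left b ord_max)) s_uniq _ _ _ _ _ => //=.
  - by move=> v; apply: leq_total.
  - by move=> v va av; apply: ord_inj => /=; lia.
  move=> x xs; have := s_col _ (imset_f _ xs).
  case/glue_family_sides => e_side; apply/orP; [left | right];
    by rewrite -?codom_glue_left -?codom_glue_right !e_side ?set21 ?set22.
- apply: D1_free; apply: (rainbow_pullback (@glue_left_inj a b) (@lshift_inj p q)
    (glue_family_left (D1 := D1) (D2 := D2)) s_uniq s3 s_even _ s_col c_inj).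
  by move=> x /s_left; rewrite inE -codom_glue_left.
apply: D2_free; apply: (rainbow_pullback (@glue_right_inj a b) (@rshift_inj p q)
  (glue_family_right (D1 := D1) (D2 := D2)) s_uniq s3 s_even _ s_col c_inj).
by move=> x /s_right; rewrite inE -codom_glue_right.
Qed.

Lemma rainbow_free_bound n : 4 <= n -> rainbow_free n (6 * (n - 1) %/ 5).
Proof.
elim/ltn_ind: n => n IH n4; have [n_le8 | n_gt8] := leqP n 8.
  case: n n4 n_le8 {IH} => [|[|[|[|[|[|[|[|[|n]]]]]]]]] // _ _.
  - exact: rainbow_free_4_3.
  - exact: rainbow_free_5_4.
  - exact: rainbow_free_6_6.
  - exact: rainbow_free_7_7.
  - exact: rainbow_free_8_8.
have rest : rainbow_free (n - 6).+1 (6 * (n - 6) %/ 5).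
  have -> : (n - 6).+1 = n - 5 by lia.
  have -> : n - 6 = n - 5 - 1 by lia.
  by apply: IH; lia.
have -> : 6 * (n - 1) %/ 5 = 6 * (n - 6) %/ 5 + 6 by lia.
rewrite {1}(_ : n = (n - 6 + 5).+1); last by lia.
exact: rainbow_free_glue rest rainbow_free_6_6.
Qed.

Theorem mainTheorem2 (n : nat) (hn : 4 <= n) :
  exists D : 'I_((6 * (n - 1)) %/ 5) -> {set {set 'I_n}},
    (forall i, is_even_cycle (D i)) /\ ~ has_rainbow_even_cycle D.
Proof. exact: rainbow_free_bound. Qed.
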